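(* Let $A$ be a congruence--distributive algebra in a variety $\mathcal{V}$ and let $\alpha$ be an atom of the lattice ${\rm Con}_{\mathcal{V}}(A)$. Then $|{\rm Con}_{\mathcal{V}}(A)|\leq 2\cdot|{\rm Con}_{\mathcal{V}}(A/\alpha)|$.
   Context: ${\rm Con}_{\mathcal{V}}(A)$ denotes the lattice of congruences of $A$ with respect to the type of $\mathcal{V}$; $A$ is congruence--distributive if this lattice is distributive. *)

From mathcomp Require Import all_boot.
From Stdlib Require Import ClassicalEpsilon.

Set Implicit Arguments.
Unset Strict Implicit.
Unset Printing Implicit Defensive.

Record signature := Signature {
  sym : Type;
  arity : sym -> nat
}.

Record algebra (S : signature) := Algebra {
  carrier :> Type;
  ops : forall f : sym S, ('I_(arity f) -> carrier) -> carrier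
}.

Section Congruences.
Variables (S : signature) (A : algebra S).

Definition is_cong (theta : A -> A -> Prop) : Prop :=
  (forall x, theta x x) /\
  (forall x y, theta x y -> theta y x) /\
  (forall x y z, theta x y -> theta y z -> theta x z) /\
  (forall (f : sym S) (xs ys : 'I_(arity f) -> A),
      (forall i, theta (xs i) (ys i)) -> theta (ops xs) (ops ys)).

Definition Con : Type := {theta : A -> A -> Prop | is_cong theta}.

Definition cmeet (phi psi : A -> A -> Prop) : A -> A -> Prop :=
  fun x y => phi x y /\ psi x y.

Definition cjoin (phi psi : A -> A -> Prop) : A -> A -> Prop :=
  fun x y => forall chi, is_cong chi ->
    (forall a b, phi a b -> chi a b) -> (forall a b, psi a b -> chi a b) ->
    chi x y.

Definition same_rel (phi psi : A -> A -> Prop) : Prop :=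
  forall x y, phi x y <-> psi x y.

Definition cong_distributive : Prop :=
  forall theta phi psi : Con,
    same_rel (cmeet (sval theta) (cjoin (sval phi) (sval psi)))
             (cjoin (cmeet (sval theta) (sval phi)) (cmeet (sval theta) (sval psi))).

Definition delta : A -> A -> Prop := fun x y => x = y.

Definition is_atom (alpha : A -> A -> Prop) : Prop :=
  is_cong alpha /\ ~ same_rel alpha delta /\
  forall theta, is_cong theta -> (forall x y, theta x y -> alpha x y) ->
    same_rel theta delta \/ same_rel theta alpha.

Definition quot_carrier (alpha : A -> A -> Prop) : Type :=
  {P : A -> Prop | exists a, P = alpha a}.

Definition qclass (alpha : A -> A -> Prop) (a : A) : quot_carrier alpha :=
  exist _ (alpha a) (ex_intro _ a erefl).

Definition qrep (alpha : A -> A -> Prop) (c : quot_carrier alpha) : A :=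
  proj1_sig (constructive_indefinite_description _ (proj2_sig c)).

Definition quot (alpha : A -> A -> Prop) : algebra S :=
  @Algebra S (quot_carrier alpha)
    (fun f xs => qclass alpha (ops (fun i => qrep (xs i)))).

End Congruences.

From mathcomp Require Import all_boot.
From Stdlib Require Import ClassicalEpsilon FunctionalExtensionality.
From Stdlib Require Import PropExtensionality ProofIrrelevance Relation_Definitions.

(* The map θ ↦ (α ≤ θ, (θ ∨ α)/α) is injective.  Above α this is the
   correspondence theorem.  If α ≰ θ then θ ∧ α = Δ because α is an atom, so
   θ ≤ φ ∨ α gives, by distributivity, θ = (θ ∧ φ) ∨ (θ ∧ α) = θ ∧ φ ≤ φ. *)

Set Implicit Arguments.
Unset Strict Implicit.
Unset Printing Implicit Defensive.

Section Congruences.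
Variables (S : signature) (A : algebra S).
Implicit Types theta phi psi chi : A -> A -> Prop.

Lemma Con_ext (theta phi : Con A) : same_rel (sval theta) (sval phi) -> theta = phi.
Proof.
case: theta phi => [theta theta_cong] [phi phi_cong] /= E.
have theta_eq : theta = phi.
  by do 2![apply: functional_extensionality => ?]; apply: propositional_extensionality.
by subst phi; rewrite (proof_irrelevance _ theta_cong phi_cong).
Qed.

Lemma cmeet_cong theta phi :
  is_cong theta -> is_cong phi -> is_cong (cmeet theta phi).
Proof.
move=> [r1 [s1 [t1 c1]]] [r2 [s2 [t2 c2]]]; split; [|split; [|split]].
- by move=> x; split; [apply: r1 | apply: r2].
- by move=> x y [? ?]; split; [apply: s1 | apply: s2].
- move=> x y z [H1 H2] [H3 H4]; split; [exact: t1 H1 H3 | exact: t2 H2 H4].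
- move=> f xs ys H; split; [apply: c1 | apply: c2] => i; by case: (H i).
Qed.

Lemma cjoin_cong phi psi : is_cong (cjoin phi psi).
Proof.
split; [|split; [|split]].
- by move=> x chi [r _] _ _; apply: r.
- move=> x y H chi chi_cong K1 K2; have [_ [s _]] := chi_cong.
  exact: s (H _ chi_cong K1 K2).
- move=> x y z H1 H2 chi chi_cong K1 K2; have [_ [_ [t _]]] := chi_cong.
  exact: t (H1 _ chi_cong K1 K2) (H2 _ chi_cong K1 K2).
- move=> f xs ys H chi chi_cong K1 K2; have [_ [_ [_ c]]] := chi_cong.
  by apply: c => i; apply: H.
Qed.

Lemma cjoinl phi psi : inclusion A phi (cjoin phi psi).
Proof. by move=> x y H chi _ K1 _; apply: K1. Qed.

Lemma cjoinr phi psi : inclusion A psi (cjoin phi psi).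
Proof. by move=> x y H chi _ _ K2; apply: K2. Qed.

Lemma cjoin_least phi psi chi : is_cong chi ->
  inclusion A phi chi -> inclusion A psi chi -> inclusion A (cjoin phi psi) chi.
Proof. by move=> chi_cong K1 K2 x y; apply. Qed.

Lemma atom_cmeet_delta alpha theta : is_atom alpha -> is_cong theta ->
  ~ inclusion A alpha theta -> inclusion A (cmeet theta alpha) (delta (A := A)).
Proof.
move=> [alpha_cong [_ alpha_min]] theta_cong alpha_not_le.
have [E | E] := alpha_min _ (cmeet_cong theta_cong alpha_cong) (fun x y => @proj2 _ _).
- by move=> x y /E.
- by case: alpha_not_le => x y /E [].
Qed.

Lemma distr_le_of_le_cjoin (theta phi psi : Con A) : cong_distributive A ->
  inclusion A (cmeet (sval theta) (sval psi)) (delta (A := A)) ->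
  inclusion A (sval theta) (cjoin (sval phi) (sval psi)) ->
  inclusion A (sval theta) (sval phi).
Proof.
move=> distrA meet_delta theta_le x y Hxy.
have [phi_refl _] := proj2_sig phi.
apply: (proj1 (distrA theta phi psi x y) (conj Hxy (theta_le x y Hxy))).
- exact: proj2_sig phi.
- by move=> a b [].
- by move=> a b /meet_delta ->; apply: phi_refl.
Qed.

Section Quotient.
Variable alpha : A -> A -> Prop.
Hypothesis alpha_cong : is_cong alpha.

Lemma qrep_qclass a : alpha a (qrep (qclass alpha a)).
Proof.
rewrite /qrep; case: constructive_indefinite_description => a' /= ->.
by case: alpha_cong.
Qed.

Definition quot_rel theta : quot alpha -> quot alpha -> Prop :=
  fun c d => theta (qrep c) (qrep d).

Lemma quot_relE theta a b : is_cong theta -> inclusion A alpha theta ->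
  quot_rel theta (qclass alpha a) (qclass alpha b) <-> theta a b.
Proof.
move=> [_ [s [t _]]] alpha_le.
have Ha := alpha_le _ _ (qrep_qclass a); have Hb := alpha_le _ _ (qrep_qclass b).
rewrite /quot_rel; split=> H.
- exact: t Ha (t _ _ _ H (s _ _ Hb)).
- exact: t (s _ _ Ha) (t _ _ _ H Hb).
Qed.

Lemma quot_rel_cong theta : is_cong theta -> inclusion A alpha theta ->
  is_cong (A := quot alpha) (quot_rel theta).
Proof.
move=> theta_cong alpha_le; have [r [s [t c]]] := theta_cong.
split; [|split; [|split]].
- by move=> ?; apply: r.
- by move=> ? ?; apply: s.
- by move=> ? ? ?; apply: t.
- by move=> f xs ys H; apply/quot_relE => //; apply: c.
Qed.

Definition quot_join (theta : Con A) : Con (quot alpha) :=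
  exist _ (quot_rel (cjoin (sval theta) alpha))
    (quot_rel_cong (cjoin_cong _ _) (@cjoinr _ _)).

Lemma quot_join_inj (theta phi : Con A) : quot_join theta = quot_join phi ->
  inclusion A (cjoin (sval theta) alpha) (cjoin (sval phi) alpha).
Proof.
move=> /(f_equal sval) /= E x y.
by rewrite -!(quot_relE x y (cjoin_cong _ _) (@cjoinr _ _)) E.
Qed.

Lemma le_of_quot_join (theta phi : Con A) :
  cong_distributive A -> is_atom alpha ->
  (inclusion A alpha (sval theta) <-> inclusion A alpha (sval phi)) ->
  quot_join theta = quot_join phi -> inclusion A (sval theta) (sval phi).
Proof.
move=> distrA alpha_atom above_iff /quot_join_inj join_le.
have theta_le x y (Hxy : sval theta x y) := join_le x y (cjoinl Hxy).
have [alpha_le_phi | alpha_not_le_phi] := classic (inclusion A alpha (sval phi)).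
  move=> x y /theta_le; exact: cjoin_least (proj2_sig phi) (fun _ _ => id) alpha_le_phi x y.
have alpha_not_le_theta : ~ inclusion A alpha (sval theta) by rewrite above_iff.
apply: (distr_le_of_le_cjoin (psi := exist _ alpha alpha_cong)) => //.
exact: atom_cmeet_delta (proj2_sig theta) alpha_not_le_theta.
Qed.

End Quotient.
End Congruences.

Theorem lemma4p26 (S : signature) (A : algebra S) (alpha : A -> A -> Prop) :
  cong_distributive A -> is_atom alpha ->
  exists g : Con A -> bool * Con (quot alpha), injective g.
Proof.
move=> distrA alpha_atom; have alpha_cong := proj1 alpha_atom.
pose above (theta : Con A) : bool :=
  if excluded_middle_informative (inclusion A alpha (sval theta)) then true else false.
have above_iff theta phi : above theta = above phi ->
    inclusion A alpha (sval theta) <-> inclusion A alpha (sval phi).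
  by rewrite /above; do 2!case: excluded_middle_informative => //; tauto.
exists (fun theta => (above theta, quot_join alpha_cong theta)).
move=> theta phi g_eq.
have above_eq := above_iff _ _ (f_equal fst g_eq).
have /= join_eq := f_equal snd g_eq.
have theta_le := le_of_quot_join distrA alpha_atom above_eq join_eq.
have phi_le := le_of_quot_join distrA alpha_atom (iff_sym above_eq) (esym join_eq).
by apply: Con_ext => x y; split; [apply: theta_le | apply: phi_le].
Qed.
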